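(* Let $G$ be a graph without isolated vertices. Then (1) $\dfrac{2|V(G)|}{\Delta(G)+1}\le \gamma_{\times 2}(G)\le \gamma_{gr}^{\times 2}(G)\le |V(G)|+1-\delta(G)$; (2) $\gamma_{gr}(G)+1\le \gamma_{gr}^{\times 2}(G)\le 2\gamma_{gr}(G)$.
   Context: Graphs are finite, simple, undirected; $N[v]$ is the closed neighborhood, $\Delta(G)$ and $\delta(G)$ the maximum and minimum degree. A set $D$ is a double dominating set if $|N[w]\cap D|\ge 2$ for all $w\in V(G)$; $\gamma_{\times 2}(G)$ is the minimum size of a double dominating set. A sequence $(v_1,\dots,v_k)$ of distinct vertices is legal if $N[v_i]\setminus\bigcup_{j<i}N[v_j]\neq\emptyset$ for every $i\ge 2$; it is a dominating sequence if moreover $\{v_1,\dots,v_k\}$ is a dominating set; $\gamma_{gr}(G)$ (Grundy domination number) is the maximum length of a dominating sequence. A sequence $S=(v_1,\dots,v_k)$ of distinct vertices is a double neighborhood sequence (DNS) if for each $i$ some $u\in N[v_i]$ satisfies $|\{j<i: u\in N[v_j]\}|\le 1$; it is a double dominating sequence (DDS) if in addition its vertex set is a double dominating set. $\gamma_{gr}^{\times 2}(G)$ (Grundy double domination number) is the maximum length of a DDS. *)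

(* A simple graph is a symmetric irreflexive relation e on a finType T. *)
From mathcomp Require Import all_boot all_order all_algebra.
Set Implicit Arguments. Unset Strict Implicit. Unset Printing Implicit Defensive.

Section Graph.
Variables (T : finType) (e : rel T).

Definition cnbh (v : T) : {set T} := [set u | (u == v) || e v u].

Definition deg (v : T) : nat := #|[set u | e v u]|.
Definition maxdeg : nat := \max_(v : T) deg v.
(* minimum degree; the default #|T| is never attained when T is nonempty *)
Definition mindeg : nat := \big[minn/#|T|]_(v : T) deg v.

Definition no_isolated : Prop := forall v : T, exists u, e v u.

Definition domset (D : {set T}) : bool :=
  [forall w, [exists v in D, w \in cnbh v]].

Definition ddomset (D : {set T}) : bool :=
  [forall w, 2 <= #|cnbh w :&: D|].

Definition gamma_x2 : nat := \big[minn/#|T|]_(D : {set T} | ddomset D) #|D|.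

(* legality: for i >= 2, N[v_i] \ U_{j<i} N[v_j] <> empty; prev = earlier vertices *)
Fixpoint legal_aux (prev s : seq T) : bool :=
  match s with
  | [::] => true
  | v :: s' =>
      (nilp prev || [exists w, (w \in cnbh v) && all (fun u => w \notin cnbh u) prev])
      && legal_aux (v :: prev) s'
  end.

Definition legal_seq (s : seq T) : bool := uniq s && legal_aux [::] s.

Definition dom_seq (s : seq T) : bool := legal_seq s && domset [set x in s].

Definition gamma_gr : nat :=
  \max_(i < #|T|.+1 | [exists t : i.-tuple T, dom_seq t]) i.

Fixpoint dns_aux (prev s : seq T) : bool :=
  match s with
  | [::] => true
  | v :: s' =>
      [exists u, (u \in cnbh v) && (count (fun x => u \in cnbh x) prev <= 1)]
      && dns_aux (v :: prev) s'
  end.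

Definition dns (s : seq T) : bool := uniq s && dns_aux [::] s.

Definition dds (s : seq T) : bool := dns s && ddomset [set x in s].

Definition gamma_gr_x2 : nat :=
  \max_(i < #|T|.+1 | [exists t : i.-tuple T, dds t]) i.

End Graph.

From mathcomp Require Import all_boot all_order all_algebra.
From mathcomp Require Import zify.
Import Order.TTheory GRing.Theory Num.Theory.

(* Counting the pairs (w, v) with v in D and w in N[v] gives 2n <= |D| (Delta + 1)
   for a double dominating set D.  A double neighbourhood sequence S that is not
   double dominating leaves some w dominated at most once; w or one of its
   neighbours is unused and may be appended, so greedy extension turns every DNS
   into a DDS.  The last vertex of a DNS S has a witness u with |N[u] /\ S| <= 2,
   whence n >= |N[u] \/ S| >= delta + 1 + |S| - 2.  A legal sequence is a DNS in
   which the footprint of its last vertex is dominated once, so it extends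
   strictly.  Finally the vertices of a DNS can be 2-coloured so that each colour
   class is legal: the witness of v_i has at most one earlier dominator, and v_i
   takes the other colour. *)

Lemma size_uniq_le_card [T : finType] [s : seq T] : uniq s -> size s <= #|T|.
Proof. by move=> /card_uniqP <-; apply: max_card. Qed.

Lemma count_le1_avoid [X : eqType] (c : pred X) [a : pred X] [p : seq X] :
  count a p <= 1 -> exists b, {in p, forall y, c y = b -> ~~ a y}.
Proof.
move=> a_p; have [/hasP[x xp ax] | /hasPn nap] := boolP (has a p); last first.
  by exists true => y /nap.
exists (~~ c x) => y yp cy; apply/negP => ay.
have xy : x != y by apply: contraPneq cy => ->; case: (c y).
have : size [:: x; y] <= size (filter a p).
  apply: uniq_leq_size; first by rewrite /= inE xy.
  by move=> z; rewrite !inE mem_filter => /orP[]/eqP->; apply/andP.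
by rewrite size_filter /=; lia.
Qed.

Lemma sum_nat_of_bool (T : finType) (P Q : pred T) :
  \sum_(x | P x) (Q x : nat) = #|[set x | P x && Q x]|.
Proof. by rewrite -sum1dep_card big_mkcondr; apply: eq_bigr => x _; case: (Q x). Qed.

Section GreedyExtension.
Context {T : finType} {P : pred (seq T)} (Q : pred (seq T)).
Hypothesis P_uniq : forall s, P s -> uniq s.
Hypothesis P_rcons : forall s, P s -> ~~ Q s -> exists v, P (rcons s v).

Lemma greedy_extension s : P s -> exists2 t, P t && Q t & size s <= size t.
Proof.
have [k] := ubnP (#|T| - size s); elim: k s => // k IH s lt_s Ps.
have [Qs | nQs] := boolP (Q s); first by exists s; rewrite ?Ps.
have [v Psv] := P_rcons _ Ps nQs.
have := size_uniq_le_card (P_uniq _ Psv); rewrite size_rcons => le_sv.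
have [|t PQt le_t] := IH (rcons s v) _ Psv; first by rewrite size_rcons; lia.
by exists t => //; rewrite (leq_trans _ le_t) // size_rcons.
Qed.

End GreedyExtension.

Section MaxSize.
Context {T : finType} {P : pred (seq T)}.

Definition max_size : nat := \max_(i < #|T|.+1 | [exists t : i.-tuple T, P t]) i.

Lemma max_size_ge [t] : uniq t -> P t -> size t <= max_size.
Proof.
move=> ut Pt; have lt_t : size t < #|T|.+1 by rewrite ltnS size_uniq_le_card.
apply: (@leq_bigmax_cond _ _ _ (Ordinal lt_t)).
by apply/existsP; exists (in_tuple t).
Qed.

Lemma max_size_le m : (forall t, P t -> size t <= m) -> max_size <= m.
Proof. by move=> Pm; apply/bigmax_leqP => i /existsP[t /Pm]; rewrite size_tuple. Qed.

End MaxSize.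

Arguments max_size {T} P.

Section Domination.
Variables (T : finType) (e : rel T).
Local Notation N := (cnbh e).

Lemma cnbh_self v : v \in N v.
Proof. by rewrite inE eqxx. Qed.

Lemma legal_aux_rcons prev s v :
  legal_aux e prev (rcons s v) =
  legal_aux e prev s &&
  ((nilp prev && nilp s) ||
   [exists w, (w \in N v) && all (fun u => w \notin N u) (prev ++ s)]).
Proof.
elim: s prev => [|x s IH] prev /=; first by rewrite cats0 andbT andbC.
rewrite IH andbA andbF /=; congr (_ && _).
apply: eq_existsb => w; congr (_ && _).
by rewrite !all_cat /= andbCA.
Qed.

Lemma dns_aux_rcons prev s v :
  dns_aux e prev (rcons s v) =
  dns_aux e prev s &&
  [exists u, (u \in N v) && (count (fun x => u \in N x) (prev ++ s) <= 1)].
Proof.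
elim: s prev => [|x s IH] prev /=; first by rewrite cats0 andbT.
rewrite IH andbA; congr (_ && _).
apply: eq_existsb => w; congr (_ && (_ <= _)).
by rewrite !count_cat /=; lia.
Qed.

Lemma legal_aux_dns prev s : legal_aux e prev s -> dns_aux e prev s.
Proof.
elim: s prev => [|v s IH] prev //= /andP[new_v /IH ->]; rewrite andbT.
case/orP: new_v => [/nilP ->|/existsP[w /andP[wv w_new]]].
  by apply/existsP; exists v; rewrite cnbh_self.
apply/existsP; exists w; rewrite wv /=.
by rewrite (@eq_in_count _ _ pred0) ?count_pred0 // => x /(allP w_new) /negbTE.
Qed.

Lemma legal_dns [s] : legal_seq e s -> dns e s.
Proof. by case/andP=> us /legal_aux_dns ds; apply/andP. Qed.

Lemma legal_rcons s : legal_seq e s -> ~~ domset e [set x in s] ->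
  exists v, legal_seq e (rcons s v).
Proof.
case/andP=> us ls /forallPn[w]; rewrite negb_exists_in => /forall_inP w_new.
have ws : w \notin s by apply: contraL (cnbh_self w) => ws; apply: w_new; rewrite inE.
exists w; rewrite /legal_seq rcons_uniq ws us legal_aux_rcons ls /=.
apply/orP; right; apply/existsP; exists w; rewrite cnbh_self; apply/allP => x xs.
by apply: w_new; rewrite inE.
Qed.

Lemma legal_extension [s] :
  legal_seq e s -> exists2 t, dom_seq e t & size s <= size t.
Proof.
have legal_uniq t : legal_seq e t -> uniq t by case/andP.
case/(greedy_extension (fun t => domset e [set x in t]) legal_uniq legal_rcons).
by move=> t; exists t.
Qed.

Lemma legal_filter_rcons (d : pred T) p v u : u \in N v ->
  legal_aux e [::] (filter d p) ->
  (d v -> {in p, forall y, d y -> u \notin N y}) ->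
  legal_aux e [::] (filter d (rcons p v)).
Proof.
move=> uv lp u_new; rewrite filter_rcons; case: ifP => // dv.
rewrite legal_aux_rcons lp /=; apply/orP; right; apply/existsP; exists u.
by rewrite uv; apply/allP => y; rewrite mem_filter => /andP[dy yp]; apply: u_new.
Qed.

Lemma dns_legal_2coloring [s] : dns e s -> exists c : pred T,
  legal_aux e [::] (filter c s) && legal_aux e [::] (filter (predC c) s).
Proof.
elim/last_ind: s => [|p v IH]; first by exists predT.
rewrite /dns rcons_uniq dns_aux_rcons => /andP[/andP[vp up] /andP[dp]].
case/existsP=> u /andP[uv /= cov_u].
have [c /andP[lc lnc]] := IH (introT andP (conj up dp)).
have [b u_new] := count_le1_avoid c cov_u.
pose c' y := if y == v then b else c y.
have c'E : {in p, c' =1 c}.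
  by move=> y yp; rewrite /c'; case: eqP => // yv; rewrite -yv yp in vp.
have c'_new : {in p, forall y, c' y = c' v -> u \notin N y}.
  by move=> y yp; rewrite (c'E y yp) /c' eqxx; apply: u_new.
exists c'; apply/andP; split; apply: legal_filter_rcons uv _ _.
- by rewrite (eq_in_filter c'E).
- by move=> dv y yp dy; apply: c'_new; rewrite ?dv ?dy.
- by rewrite (@eq_in_filter _ (predC c') (predC c)) // => y yp /=; rewrite c'E.
- by move=> /negbTE dv y yp /negbTE dy; apply: c'_new; rewrite ?dv ?dy.
Qed.

Lemma dns_half_legal [s] :
  dns e s -> exists2 t, legal_seq e t & size s <= 2 * size t.
Proof.
move=> ds; have [c /andP[lc lnc]] := dns_legal_2coloring ds.
have us : uniq s by case/andP: ds.
have := count_predC c s; rewrite -!size_filter => split_s.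
have [le_nc | lt_c] := leqP (size (filter (predC c) s)) (size (filter c s)).
  by exists (filter c s); rewrite 1?/legal_seq ?filter_uniq ?lc //; lia.
by exists (filter (predC c) s); rewrite 1?/legal_seq ?filter_uniq ?lnc //; lia.
Qed.

Lemma gamma_grE : gamma_gr e = max_size (dom_seq e).
Proof. by []. Qed.

Lemma gamma_gr_x2E : gamma_gr_x2 e = max_size (dds e).
Proof. by []. Qed.

Lemma dom_seq_size_le_gamma_gr [t] : dom_seq e t -> size t <= gamma_gr e.
Proof. by move=> dt; have /andP[/andP[ut _] _] := dt; apply: max_size_ge ut dt. Qed.

Lemma dds_size_le_gamma_gr_x2 [t] : dds e t -> size t <= gamma_gr_x2 e.
Proof. by move=> dt; have /andP[/andP[ut _] _] := dt; apply: max_size_ge ut dt. Qed.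

Lemma gamma_gr_x2_le_double : gamma_gr_x2 e <= 2 * gamma_gr e.
Proof.
rewrite gamma_gr_x2E; apply: max_size_le => s /andP[ds _].
have [t lt le_st] := dns_half_legal ds; have [u du le_tu] := legal_extension lt.
rewrite (leq_trans le_st) // leq_mul2l (leq_trans le_tu) ?orbT //.
exact: dom_seq_size_le_gamma_gr.
Qed.

Section NoIsolatedVertex.
Hypotheses (esym : symmetric e) (eirr : irreflexive e) (noiso : no_isolated e).
Local Notation dominators s w := (count (fun x => w \in cnbh e x) s).

Lemma cnbh_sym w x : (w \in N x) = (x \in N w).
Proof. by rewrite !inE eq_sym esym. Qed.

Lemma card_cnbh v : #|N v| = (deg e v).+1.
Proof.
have -> : N v = v |: [set u | e v u] by apply/setP => u; rewrite !inE.
by rewrite cardsU1 inE eirr.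
Qed.

Lemma sum_card_cnbhI (D : {set T}) :
  \sum_w #|N w :&: D| = \sum_(v in D) #|N v|.
Proof.
transitivity (\sum_w \sum_(v in D) (v \in N w : nat)).
  apply: eq_bigr => w _; rewrite sum_nat_of_bool.
  by apply: eq_card => v; rewrite !inE andbC.
rewrite exchange_big; apply: eq_bigr => v _.
under eq_bigr do rewrite cnbh_sym.
by rewrite sum_nat_of_bool; apply: eq_card => w; rewrite !inE.
Qed.

Lemma ddomset_card_lb D : ddomset e D -> 2 * #|T| <= #|D| * (maxdeg e).+1.
Proof.
move=> /forallP dom2.
have le_sum : 2 * #|T| <= \sum_w #|N w :&: D|.
  by rewrite mulnC -sum_nat_const; apply: leq_sum => w _; apply: dom2.
rewrite (leq_trans le_sum) // sum_card_cnbhI -sum_nat_const.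
by apply: leq_sum => v _; rewrite card_cnbh ltnS; apply: (leq_bigmax (F := deg e)).
Qed.

Lemma maxdeg_gt0 : 0 < #|T| -> 0 < maxdeg e.
Proof.
case/card_gt0P=> v _; have [u evu] := noiso v.
apply: leq_trans (leq_bigmax (F := deg e) v).
by apply/card_gt0P; exists u; rewrite inE.
Qed.

Lemma gamma_x2_lb : 0 < #|T| -> 2 * #|T| <= gamma_x2 e * (maxdeg e).+1.
Proof.
move=> T_gt0; apply: (big_ind (fun m => 2 * #|T| <= m * (maxdeg e).+1)).
- by rewrite mulnC leq_mul2l ltnS maxdeg_gt0 ?orbT.
- by move=> m n; rewrite /minn; case: ifP.
- exact: ddomset_card_lb.
Qed.

Lemma dominators_card s w : uniq s -> dominators s w = #|N w :&: [set x in s]|.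
Proof.
move=> us; rewrite -size_filter -(card_uniqP (filter_uniq _ us)).
by apply: eq_card => x; rewrite mem_filter !inE eq_sym esym.
Qed.

Lemma dns_rcons [s w] :
  dns e s -> dominators s w <= 1 -> exists v, dns e (rcons s v).
Proof.
case/andP=> us ds dom_w; have [u ewu] := noiso w.
have uw : u != w by apply: contraTneq ewu => ->; rewrite eirr.
have [v vw vs] : exists2 v, v \in N w & v \notin s.
  have [ws | ?] := boolP (w \in s); last by exists w; rewrite ?cnbh_self.
  have [us' | ?] := boolP (u \in s); last by exists u; rewrite // inE ewu orbT.
  have : #|[set w; u]| <= #|N w :&: [set x in s]|.
    by apply: subset_leq_card; apply/subsetP => x; rewrite !inE => /orP[]/eqP->;
      rewrite ?eqxx ?ewu ?ws ?us' ?orbT.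
  by rewrite cards2 eq_sym uw -dominators_card //; lia.
exists v; rewrite /dns rcons_uniq vs us dns_aux_rcons ds /=.
by apply/existsP; exists w; rewrite cnbh_sym vw.
Qed.

Lemma dns_rcons_ddomset s : dns e s -> ~~ ddomset e [set x in s] ->
  exists v, dns e (rcons s v).
Proof.
move=> ds /forallPn[w]; rewrite -ltnNge ltnS => dom_w.
by apply: (@dns_rcons _ w ds); rewrite dominators_card //; case/andP: ds.
Qed.

Lemma dns_extension [s] : dns e s -> exists2 t, dds e t & size s <= size t.
Proof.
have dns_uniq t : dns e t -> uniq t by case/andP.
exact: greedy_extension (fun t => ddomset e [set x in t]) dns_uniq dns_rcons_ddomset s.
Qed.

Lemma dns_size_lt_gamma_gr_x2 [s w] : dns e s -> dominators s w <= 1 ->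
  size s < gamma_gr_x2 e.
Proof.
move=> ds /(dns_rcons ds)[v /dns_extension[t dt le_t]].
by rewrite -(size_rcons s v) (leq_trans le_t) ?dds_size_le_gamma_gr_x2.
Qed.

Lemma gamma_x2_le_gamma_gr_x2 : gamma_x2 e <= gamma_gr_x2 e.
Proof.
have [t dt _] := dns_extension (isT : dns e [::]).
apply: leq_trans (dds_size_le_gamma_gr_x2 dt).
case/andP: dt => /andP[ut _] ddt; rewrite -(card_uniqP ut) -cardsE.
exact: (bigmin_le_cond (T := nat)).
Qed.

Lemma dns_size_le [s] : dns e s -> size s <= #|T| + 1 - mindeg e.
Proof.
case/lastP: s => // p v; rewrite /dns rcons_uniq dns_aux_rcons.
case/andP=> /andP[vp up] /andP[_ /existsP[u /andP[uv /= dom_u]]].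
have us : uniq (rcons p v) by rewrite rcons_uniq vp up.
have le_mindeg : mindeg e <= deg e u by exact: (bigmin_le (T := nat)).
have dom2_u : #|N u :&: [set x in rcons p v]| <= 2.
  by rewrite -dominators_card // -cats1 count_cat /=; case: (u \in N v); lia.
have card_s : #|[set x in rcons p v]| = size (rcons p v).
  by rewrite cardsE; apply/card_uniqP.
have := subset_leq_card (subsetT (N u :|: [set x in rcons p v])).
have := cardsUI (N u) [set x in rcons p v].
rewrite -cardsT card_cnbh card_s; lia.
Qed.

Lemma gamma_gr_x2_le : gamma_gr_x2 e <= #|T| + 1 - mindeg e.
Proof. by rewrite gamma_gr_x2E; apply: max_size_le => t /andP[/dns_size_le]. Qed.

Lemma legal_dominators [s] :
  0 < #|T| -> legal_seq e s -> exists w, dominators s w <= 1.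
Proof.
move=> /card_gt0P[w0 _]; case/lastP: s => [|p v]; first by exists w0.
rewrite /legal_seq legal_aux_rcons => /andP[_ /andP[_ /orP[/andP[_ /nilP ->]|]]].
  by exists v => /=; case: (v \in N v).
case/existsP=> w /andP[wv /allP w_new]; exists w.
rewrite -cats1 count_cat /= (@eq_in_count _ _ pred0) ?count_pred0.
  by case: (w \in N v).
by move=> x /w_new /negbTE.
Qed.

Lemma gamma_gr_lt_gamma_gr_x2 : 0 < #|T| -> gamma_gr e < gamma_gr_x2 e.
Proof.
move=> T_gt0; have legal_lt s : legal_seq e s -> size s < gamma_gr_x2 e.
  move=> ls; have [w] := legal_dominators T_gt0 ls.
  exact: dns_size_lt_gamma_gr_x2 (legal_dns ls).
have ggx2_gt0 : 0 < gamma_gr_x2 e := legal_lt [::] isT.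
rewrite gamma_grE -(prednK ggx2_gt0) ltnS; apply: max_size_le => t /andP[lt _].
by rewrite -ltnS prednK ?legal_lt.
Qed.

End NoIsolatedVertex.

End Domination.

Theorem proposition1 (T : finType) (e : rel T)
  (esym : symmetric e) (eirr : irreflexive e)
  (Tne : 0 < #|T|) (noiso : no_isolated e) :
  [/\ (((2 * #|T|)%:R / (maxdeg e).+1%:R : rat) <= (gamma_x2 e)%:R)%R,
      gamma_x2 e <= gamma_gr_x2 e,
      gamma_gr_x2 e <= #|T| + 1 - mindeg e,
      gamma_gr e + 1 <= gamma_gr_x2 e
    & gamma_gr_x2 e <= 2 * gamma_gr e].
Proof.
split.
- by rewrite ler_pdivrMr ?ltr0Sn // -natrM ler_nat gamma_x2_lb.
- exact: gamma_x2_le_gamma_gr_x2.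
- exact: gamma_gr_x2_le.
- by rewrite addn1 gamma_gr_lt_gamma_gr_x2.
- exact: gamma_gr_x2_le_double.
Qed.
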